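(* Let $\mathcal{A}\subseteq\mathbb{R}^a$ be a closed convex set with recession cone $\mathcal{A}_\infty$. Consider the following properties. (S1) There is $a^0\in\mathbb{R}^a$ with $\mathcal{A}\subseteq\{a^0\}+\mathcal{A}_\infty$. (S2) There are $k\in\mathbb{N}$ and $a^1,\dots,a^k\in\mathbb{R}^a$ with $\mathcal{A}\subseteq\operatorname{conv}\{a^1,\dots,a^k\}+\mathcal{A}_\infty$. (S3) $\sup_{x\in\mathcal{A}}\inf_{y\in\mathcal{A}_\infty}\|x-y\|_1<\infty$. Then (S1) implies (S2), and (S2) is equivalent to (S3). If in addition $\mathcal{A}_\infty$ has nonempty interior, then (S1), (S2) and (S3) are all equivalent.
   Context: The recession cone of a set $X\subseteq\mathbb{R}^n$ is $X_\infty=\{d\in\mathbb{R}^n: x+\lambda d\in X \text{ for all } x\in X,\ \lambda\ge 0\}$. $\|\cdot\|_1$ denotes the $\ell_1$ norm. *)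

From HB Require Import structures.
From mathcomp Require Import all_boot all_order all_algebra.
From mathcomp Require Import all_classical all_reals all_analysis.
Set Implicit Arguments. Unset Strict Implicit. Unset Printing Implicit Defensive.
Import Order.TTheory GRing.Theory Num.Theory.
Import numFieldTopology.Exports numFieldNormedType.Exports.
Local Open Scope classical_set_scope.
Local Open Scope ring_scope.

Section Defs.
Variables (R : realType) (n : nat).
Notation V := 'rV[R]_n.

Definition l1norm (x : V) : R := \sum_(i < n) `|x ord0 i|.

Definition recession_cone (X : set V) : set V :=
  [set d | forall x (l : R), X x -> 0 <= l -> X (x + l *: d)].

Definition mink_sum (B C : set V) : set V :=
  [set z | exists b, B b /\ exists c, C c /\ z = b + c].

Definition conv_hull (k : nat) (a : 'I_k -> V) : set V :=
  [set z | exists lam : 'I_k -> R,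
     (forall i, 0 <= lam i) /\ \sum_(i < k) lam i = 1 /\
     z = \sum_(i < k) lam i *: a i].
End Defs.

From HB Require Import structures.
From mathcomp Require Import all_boot all_order all_algebra.
From mathcomp Require Import all_classical all_reals all_analysis.
From mathcomp Require Import ring lra.
Set Implicit Arguments. Unset Strict Implicit. Unset Printing Implicit Defensive.
Import Order.TTheory GRing.Theory Num.Theory.
Import numFieldTopology.Exports numFieldNormedType.Exports.
Local Open Scope classical_set_scope.
Local Open Scope ring_scope.

(* If every point of A is within l1-distance r of the recession cone, then A lies
   in the l1 ball of radius r plus the cone, and that ball is the convex hull of
   0 and the 2n points +-r e_j.  Conversely a finite convex hull is bounded, which
   bounds the distance.  When the cone has an interior direction d, any bounded
   c is pushed into the cone by adding t d for t large, so a finite hull collapses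
   to the single apex -t d. *)

Lemma ltey_lt_pos (R : realDomainType) (x : \bar R) :
  (x < +oo)%E -> exists2 r : R, 0 < r & (x < r%:E)%E.
Proof.
case: x => [s| |] // _; last by exists 1 => //; exact: ltNyr.
exists (`|s| + 1); first by have := normr_ge0 s; lra.
by rewrite lte_fin; have := ler_norm s; lra.
Qed.

Lemma conv_hull_le_sum (R : realType) (n k : nat) (N : 'rV[R]_n -> R)
    (a : 'I_k -> 'rV[R]_n) (c : 'rV[R]_n) :
  (forall u v, N (u + v) <= N u + N v) -> (forall l u, N (l *: u) = `|l| * N u) ->
  conv_hull a c -> N c <= \sum_(i < k) N (a i).
Proof.
move=> ND NZ [lam [lam_ge0 [lam_sum1 ->]]].
have N0 : N 0 = 0 by rewrite -(scale0r 0) NZ normr0 mul0r.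
have N_ge0 u : 0 <= N u.
  have := ND u (-1 *: u); rewrite NZ normrN normr1 mul1r scaleN1r subrr N0; lra.
have lam_le1 i : lam i <= 1 by rewrite -lam_sum1 (bigD1 i) //= lerDl sumr_ge0.
apply: (big_ind2 (fun u r => N u <= r)); first by rewrite N0.
  by move=> x1 x2 y1 y2 h1 h2; apply: le_trans (ND _ _) _; apply: lerD.
by move=> i _; rewrite NZ ger0_norm // -[leRHS]mul1r ler_wpM2r.
Qed.

Lemma interior_cone_absorbs (R : realType) (V : normedModType R) (C : set V) d :
  (forall (l : R) x, 0 <= l -> C x -> C (l *: x)) -> (interior C) d ->
  forall K : R, 0 <= K -> exists2 t : R, 0 < t & forall c, `|c| <= K -> C (c + t *: d).
Proof.
move=> CZ /nbhs_ballP[e /= e_gt0 de_C] K K_ge0.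
have t_gt0 : 0 < K / e + 1 by have := divr_ge0 K_ge0 (ltW e_gt0); lra.
exists (K / e + 1) => // c cK.
have -> : c + (K / e + 1) *: d = (K / e + 1) *: (d + (K / e + 1)^-1 *: c).
  by rewrite scalerDr scalerA mulfV ?lt0r_neq0 // scale1r addrC.
apply: CZ; first exact: ltW.
apply: de_C; rewrite -ball_normE /ball_ /= opprD addNKr normrN normrZ.
rewrite gtr0_norm ?invr_gt0 // ltr_pdivrMl // mulrDl divfK ?gt_eqF // mul1r.
lra.
Qed.

Section RecessionCone.
Variables (R : realType) (n : nat).
Implicit Types (A : set 'rV[R]_n) (d : 'rV[R]_n).

Lemma recession_coneD A d1 d2 :
  recession_cone A d1 -> recession_cone A d2 -> recession_cone A (d1 + d2).
Proof.
by move=> h1 h2 x l Ax l_ge0; rewrite scalerDr addrA; apply: h2 => //; apply: h1.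
Qed.

Lemma recession_coneZ A (c : R) d :
  0 <= c -> recession_cone A d -> recession_cone A (c *: d).
Proof.
by move=> c_ge0 h x l Ax l_ge0; rewrite scalerA; apply: h => //; rewrite mulr_ge0.
Qed.

End RecessionCone.

Section OrdBranch.
Variable n : nat.

Definition ord_branch (T : Type) (t0 : T) (f g : 'I_n -> T) (i : 'I_(n + n).+1) : T :=
  match unlift ord0 i with
  | Some j => match fintype.split j with inl j => f j | inr j => g j end
  | None => t0
  end.

Section OrdBranchEval.
Variables (T : Type) (t0 : T) (f g : 'I_n -> T).

Lemma ord_branch0 : ord_branch t0 f g ord0 = t0.
Proof. by rewrite /ord_branch unlift_none. Qed.

Lemma ord_branchl j : ord_branch t0 f g (lift ord0 (lshift n j)) = f j.
Proof. by rewrite /ord_branch liftK; have /= -> := unsplitK (inl j : 'I_n + 'I_n). Qed.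

Lemma ord_branchr j : ord_branch t0 f g (lift ord0 (rshift n j)) = g j.
Proof. by rewrite /ord_branch liftK; have /= -> := unsplitK (inr j : 'I_n + 'I_n). Qed.

End OrdBranchEval.

Lemma big_ord_branch (Z : nmodType) (h : 'I_(n + n).+1 -> Z) :
  \sum_i h i = h ord0 + (\sum_(j < n) h (lift ord0 (lshift n j)) +
                         \sum_(j < n) h (lift ord0 (rshift n j))).
Proof. by rewrite big_ord_recl big_split_ord. Qed.

End OrdBranch.
Arguments ord_branch {n T}.

Section L1Norm.
Variables (R : realType) (n : nat).
Implicit Types (u v z : 'rV[R]_n).

Lemma l1normD u v : l1norm (u + v) <= l1norm u + l1norm v.
Proof. by rewrite /l1norm -big_split ler_sum // => i _; rewrite mxE ler_normD. Qed.

Lemma l1normZ (l : R) u : l1norm (l *: u) = `|l| * l1norm u.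
Proof. by rewrite /l1norm mulr_sumr; apply: eq_bigr => i _; rewrite mxE normrM. Qed.

Definition l1dist (C : set 'rV[R]_n) x : \bar R :=
  ereal_inf [set (l1norm (x - y))%:E | y in C].

Definition cross_polytope_vertex (r : R) : 'I_(n + n).+1 -> 'rV[R]_n :=
  ord_branch 0 (fun j => r *: 'e_j) (fun j => - r *: 'e_j).

Lemma l1ball_sub_cross_polytope (r : R) z :
  0 < r -> l1norm z < r -> conv_hull (cross_polytope_vertex r) z.
Proof.
move=> r_gt0 zr.
(* weights: the positive and negative parts of z_j / r, the remaining mass on 0 *)
pose p j := (`|z 0 j| + z 0 j) / (2 * r).
pose m j := (`|z 0 j| - z 0 j) / (2 * r).
exists (ord_branch (1 - l1norm z / r) p m); split; [|split].
- move=> i; rewrite /ord_branch; case: unlift => [j|].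
    case: fintype.split => k; apply: divr_ge0; try lra;
      have := ler_norm (z 0 k); have := ler_norm (- z 0 k); rewrite normrN; lra.
  by rewrite subr_ge0 ler_pdivrMr // mul1r ltW.
- rewrite big_ord_branch ord_branch0 -big_split /=.
  under eq_bigr => j _ do rewrite ord_branchl ord_branchr.
  suff -> : \sum_j (p j + m j) = l1norm z / r by rewrite subrK.
  rewrite /l1norm mulr_suml; apply: eq_bigr => j _.
  by rewrite /p /m; field; rewrite lt0r_neq0.
- rewrite big_ord_branch ord_branch0 /cross_polytope_vertex ord_branch0.
  rewrite scaler0 add0r -big_split /=.
  under eq_bigr => j _ do rewrite !ord_branchl !ord_branchr !scalerA -scalerDl.
  rewrite {1}(row_sum_delta z); apply: eq_bigr => j _; congr (_ *: _).
  by rewrite /p /m; field; rewrite lt0r_neq0.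
Qed.

End L1Norm.
Arguments cross_polytope_vertex {R} n r.

Section HullPlusCone.
Variables (R : realType) (n : nat).
Implicit Types (B C : set 'rV[R]_n).

Lemma mink_sumSl B B' C : B `<=` B' -> mink_sum B C `<=` mink_sum B' C.
Proof. by move=> BB' _ [b [Bb [c [Cc ->]]]]; exists b; split; [exact: BB'|exists c]. Qed.

Lemma conv_hull1 (a : 'rV[R]_n) : conv_hull (fun _ : 'I_1 => a) a.
Proof. by exists (fun=> 1); rewrite !big_ord1 scale1r. Qed.

Lemma ereal_sup_l1dist_le (A : set 'rV[R]_n) k (a : 'I_k -> 'rV[R]_n) C :
  A `<=` mink_sum (conv_hull a) C ->
  (ereal_sup [set l1dist C x | x in A] <= (\sum_i l1norm (a i))%:E)%E.
Proof.
move=> AaC; apply: ge_ereal_sup => _ [x Ax <-].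
have [c [hc [d [Cd ->]]]] := AaC x Ax.
apply: ge_ereal_inf; exists (l1norm (c + d - d))%:E; first by exists d.
by rewrite addrK lee_fin; apply: conv_hull_le_sum hc; [exact: l1normD|exact: l1normZ].
Qed.

Lemma sub_cross_polytope_of_l1dist_lt (A : set 'rV[R]_n) C (r : R) :
  0 < r -> (forall x, A x -> (l1dist C x < r%:E)%E) ->
  A `<=` mink_sum (conv_hull (cross_polytope_vertex n r)) C.
Proof.
move=> r_gt0 Ar x /Ar /ereal_inf_lt[_ [y Cy <-]]; rewrite lte_fin => xy_r.
exists (x - y); split; first exact: l1ball_sub_cross_polytope.
by exists y; split => //; rewrite subrK.
Qed.

Lemma conv_hull_sub_apex (A : set 'rV[R]_n) k (a : 'I_k -> 'rV[R]_n) :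
  interior (recession_cone A) !=set0 ->
  exists a0, mink_sum (conv_hull a) (recession_cone A) `<=`
             mink_sum [set x | x = a0] (recession_cone A).
Proof.
move=> [d d_int].
have cone_scale l x : 0 <= l -> recession_cone A x -> recession_cone A (l *: x).
  exact: recession_coneZ.
have K_ge0 : 0 <= \sum_i `|a i| by apply: sumr_ge0.
have [t t_gt0 absorb] := interior_cone_absorbs cone_scale d_int K_ge0.
exists (- t *: d) => _ [c [hc [d' [hd' ->]]]].
exists (- t *: d); split => //; exists (c + t *: d + d'); split.
  apply: recession_coneD => //; apply: absorb.
  by apply: conv_hull_le_sum hc; [exact: ler_normD|exact: normrZ].
by rewrite scaleNr [c + t *: d]addrC -addrA addKr.
Qed.

End HullPlusCone.

Theorem mainTheorem2 (R : realType) (n : nat) (A : set 'rV[R]_n) :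
  closed A -> convex_set A ->
  let Ainf := recession_cone A in
  let S1 := exists a0 : 'rV[R]_n, A `<=` mink_sum [set x | x = a0] Ainf in
  let S2 := exists (k : nat) (a : 'I_k -> 'rV[R]_n), A `<=` mink_sum (conv_hull a) Ainf in
  let S3 := (ereal_sup [set ereal_inf [set (l1norm (x - y))%:E | y in Ainf]
                       | x in A] < +oo)%E in
  (S1 -> S2) /\ (S2 <-> S3) /\
  (interior Ainf !=set0 -> (S1 <-> S2) /\ (S2 <-> S3)).
Proof.
move=> _ _ Ainf S1 S2 S3.
have S12 : S1 -> S2.
  case=> a0 A_apex; exists 1, (fun=> a0).
  by apply: subset_trans A_apex (mink_sumSl _) => _ ->; exact: conv_hull1.
have S23 : S2 -> S3.
  case=> k [a A_hull]; apply: le_lt_trans (ereal_sup_l1dist_le A_hull) _; exact: ltry.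
have S32 : S3 -> S2.
  case/ltey_lt_pos=> r r_gt0 sup_lt_r; exists (n + n).+1, (cross_polytope_vertex n r).
  apply: sub_cross_polytope_of_l1dist_lt r_gt0 _ => x Ax.
  by apply: le_lt_trans sup_lt_r; apply: ereal_sup_ubound; exists x.
have S21 : interior Ainf !=set0 -> S2 -> S1.
  move=> int_ne0 [k [a A_hull]]; have [a0 hull_apex] := conv_hull_sub_apex a int_ne0.
  by exists a0; apply: subset_trans A_hull hull_apex.
by do !split => //; exact: S21.
Qed.
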